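(* Let $P$ be a disjunctive program and let $P_1,P_2,\dots$ be any module sequence for $P$ (induced by any enumeration of $GH$). Then: (1) $\bigcup_{i\ge 1}P_i=\mathsf{Ground}(P)$; (2) for each $i\ge 1$ and each $j\ge i$, $\mathit{atom}(P_i)$ is a splitting set of $P_j$ and $P_i=bot_{\mathit{atom}(P_i)}(P_j)$; (3) for each $i\ge 1$, $\mathit{atom}(P_i)$ is a splitting set of $P$ and $P_i=bot_{\mathit{atom}(P_i)}(P)$; (4) for each $i\ge 1$, $P_i$ is downward closed.
   Context: A disjunctive program is a set of rules $A_1\vee\dots\vee A_m\leftarrow L_1,\dots,L_n$ ($m>0$, $n\ge 0$) where the $A_j$ are atoms and each $L_i$ is an atom $A$ or a negated atom $\mathtt{not}\,A$, over a first-order language possibly containing function symbols. For a rule $r$, $head(r)=\{A_1,\dots,A_m\}$. $\mathsf{Ground}(P)$ is the set of ground instances of rules of $P$ over the Herbrand universe; for a set $X$ of ground rules, $\mathit{atom}(X)$ is the set of ground atoms occurring in $X$, and $\mathit{atom}(r)$ the set of atoms of a ground rule $r$. The dependency graph of $P$ has the ground atoms as vertices and an edge from $A$ to $B$ whenever, for some $r\in\mathsf{Ground}(P)$, $A\in head(r)$ and $B$ occurs in $r$ (positively or negatively in the body, or in the head). $A$ depends on $B$ if there is a directed path from $A$ to $B$ in this graph; every atom depends on itself. $GH=\{p\mid p\in head(r), r\in\mathsf{Ground}(P)\}$. Given an enumeration $p_1,p_2,\dots$ of $GH$, the induced module sequence is $P_1=\{r\in\mathsf{Ground}(P)\mid p_1\text{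 depends on some }A\in head(r)\}$ and $P_{i+1}=P_i\cup\{r\in\mathsf{Ground}(P)\mid p_{i+1}\text{ depends on some }A\in head(r)\}$. For a set $Q$ of ground rules (for a non-ground $P$, take $Q=\mathsf{Ground}(P)$), a splitting set of $Q$ is a set $U$ of ground atoms such that for every $r\in Q$, if $head(r)\cap U\ne\emptyset$ then $\mathit{atom}(r)\subseteq U$; then $bot_U(Q)=\{r\in Q\mid head(r)\cap U\neq\emptyset\}$. A subprogram $P'\subseteq\mathsf{Ground}(P)$ is downward closed if for each atom $A\in\mathit{atom}(P')$, $P'$ contains every $r\in\mathsf{Ground}(P)$ with $A\in head(r)$. *)

From Stdlib Require Import List Relations.
Import ListNotations.
Set Implicit Arguments.

Section Syntax.
(* F : function symbols (constants are 0-ary), ar : their arities,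
   Pr : predicate symbols. Variables are indexed by nat. *)
Variables (F Pr : Type) (ar : F -> nat).

Inductive term : Type :=
| Var : nat -> term
| App : F -> list term -> term.

Definition atom : Type := (Pr * list term)%type.

Inductive literal : Type :=
| Pos : atom -> literal
| Neg : atom -> literal.

Definition lit_atom (l : literal) : atom :=
  match l with Pos a => a | Neg a => a end.

(* A1 v ... v Am <- L1, ..., Ln *)
Record rule : Type := mkRule { head : list atom; body : list literal }.

Definition program := rule -> Prop.

Definition disjunctive_program (P : program) : Prop :=
  forall r, P r -> head r <> [].

Fixpoint in_HU (t : term) : Prop :=
  match t with
  | Var _ => False
  | App f l => length l = ar f /\
      (fix all (l : list term) : Prop :=
         match l with [] => True | t :: l' => in_HU t /\ all l' end) l
  end.

Fixpoint var_in_term (x : nat) (t : term) : Prop :=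
  match t with
  | Var y => x = y
  | App _ l =>
      (fix ex (l : list term) : Prop :=
         match l with [] => False | t :: l' => var_in_term x t \/ ex l' end) l
  end.

Fixpoint subst_term (s : nat -> term) (t : term) : term :=
  match t with
  | Var y => s y
  | App f l => App f (map (subst_term s) l)
  end.

Definition subst_atom (s : nat -> term) (a : atom) : atom :=
  (fst a, map (subst_term s) (snd a)).

Definition subst_lit (s : nat -> term) (l : literal) : literal :=
  match l with Pos a => Pos (subst_atom s a) | Neg a => Neg (subst_atom s a) end.

Definition subst_rule (s : nat -> term) (r : rule) : rule :=
  mkRule (map (subst_atom s) (head r)) (map (subst_lit s) (body r)).

Definition rule_atoms (r : rule) : list atom :=
  head r ++ map lit_atom (body r).

Definition var_in_rule (x : nat) (r : rule) : Prop :=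
  exists a, In a (rule_atoms r) /\ exists t, In t (snd a) /\ var_in_term x t.

Definition Ground (P : program) : program :=
  fun r' => exists r s, P r /\
    (forall x, var_in_rule x r -> in_HU (s x)) /\ r' = subst_rule s r.

Definition atoms_of (X : program) : atom -> Prop :=
  fun A => exists r, X r /\ In A (rule_atoms r).

Definition dep_edge (P : program) (A B : atom) : Prop :=
  exists r, Ground P r /\ In A (head r) /\ In B (rule_atoms r).

Definition depends (P : program) : atom -> atom -> Prop :=
  clos_refl_trans atom (dep_edge P).

Definition GH (P : program) : atom -> Prop :=
  fun p => exists r, Ground P r /\ In p (head r).

(* An enumeration of GH, 0-indexed: len = None means an infinite
   enumeration e 0, e 1, ...; len = Some n means e 0, ..., e (n-1). *)
Definition in_range (len : option nat) (i : nat) : Prop :=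
  match len with None => True | Some n => i < n end.

Definition is_enumeration (S : atom -> Prop) (len : option nat) (e : nat -> atom)
  : Prop :=
  (forall i, in_range len i -> S (e i)) /\
  (forall p, S p -> exists i, in_range len i /\ e i = p) /\
  (forall i j, in_range len i -> in_range len j -> e i = e j -> i = j).

Definition module_step (P : program) (p : atom) : program :=
  fun r => Ground P r /\ exists A, In A (head r) /\ depends P p A.

(* induced module sequence (module P e i is P_{i+1} of the paper) *)
Fixpoint module (P : program) (e : nat -> atom) (i : nat) : program :=
  match i with
  | 0 => module_step P (e 0)
  | S k => fun r => module P e k r \/ module_step P (e (S k)) r
  end.

Definition splitting_set (U : atom -> Prop) (Q : program) : Prop :=
  forall r, Q r -> (exists A, In A (head r) /\ U A) ->
    forall A, In A (rule_atoms r) -> U A.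

Definition bot (U : atom -> Prop) (Q : program) : program :=
  fun r => Q r /\ exists A, In A (head r) /\ U A.

Definition same_rules (X Y : program) : Prop := forall r, X r <-> Y r.

Definition downward_closed (P : program) (X : program) : Prop :=
  forall A, atoms_of X A -> forall r, Ground P r -> In A (head r) -> X r.

End Syntax.

From Pilot Require Import Defs.
From Stdlib Require Import List Relations Arith Lia.
Import ListNotations.

(* Every atom occurring in P_i is reachable in the dependency graph from one of
   p_1, ..., p_i, so any ground rule with such an atom in its head is already in
   P_i: the modules are downward closed.  A downward closed set of rules whose
   heads are nonempty is the bottom of any larger subset of Ground(P) with
   respect to its own atoms, which gives (2) and (3); (1) holds because each
   ground rule has a head atom, and that atom is some p_i. *)

Lemma nonnil_In {T : Type} {l : list T} : l <> [] -> exists x, In x l.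
Proof. destruct l as [|x l]; [contradiction | exists x; left; reflexivity]. Qed.

Section DownwardClosed.
Context {F Pr : Type} {ar : F -> nat} {P : program F Pr}.

Lemma downward_closed_splitting_set (X Q : program F Pr) :
  downward_closed ar P X -> (forall r, Q r -> Ground ar P r) ->
  splitting_set (atoms_of X) Q.
Proof.
  intros HX HQ r Hr [A [HA HXA]] B HB.
  exists r. split; [exact (HX A HXA r (HQ r Hr) HA) | exact HB].
Qed.

Lemma head_in_atoms_of {X : program F Pr} {r A} :
  X r -> In A (Defs.head r) -> atoms_of X A.
Proof. intros Hr HA. exists r. split; [exact Hr | apply in_or_app; left; exact HA]. Qed.

Lemma downward_closed_bot (X Q : program F Pr) :
  downward_closed ar P X ->
  (forall r, X r -> Defs.head r <> []) ->
  (forall r, X r -> Q r) -> (forall r, Q r -> Ground ar P r) ->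
  same_rules X (bot (atoms_of X) Q).
Proof.
  intros HX Hhead HXQ HQ r. split.
  - intros Hr. split; [exact (HXQ r Hr) |].
    destruct (nonnil_In (Hhead r Hr)) as [A HA].
    exists A. split; [exact HA | exact (head_in_atoms_of Hr HA)].
  - intros [Hr [A [HA HXA]]]. exact (HX A HXA r (HQ r Hr) HA).
Qed.

Lemma Ground_head_nonempty {r} :
  disjunctive_program P -> Ground ar P r -> Defs.head r <> [].
Proof.
  intros HP [r0 [s [Hr0 [_ ->]]]] Eh. simpl in Eh.
  apply map_eq_nil in Eh. exact (HP r0 Hr0 Eh).
Qed.

End DownwardClosed.

Section Modules.
Context {F Pr : Type} {ar : F -> nat} {P : program F Pr} {e : nat -> atom F Pr}.

Lemma moduleP i r :
  module ar P e i r <-> exists k, k <= i /\ module_step ar P (e k) r.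
Proof.
  induction i as [|i IH]; simpl.
  - split; [intros H; exists 0; split; [lia | exact H] |].
    intros [k [Hk H]]. replace k with 0 in H by lia. exact H.
  - rewrite IH. split.
    + intros [[k [Hk H]] | H]; [exists k | exists (S i)]; split; (lia || exact H).
    + intros [k [Hk H]]. destruct (Nat.eq_dec k (S i)) as [-> | Hne].
      * right; exact H.
      * left; exists k; split; [lia | exact H].
Qed.

Lemma module_Ground i r : module ar P e i r -> Ground ar P r.
Proof. rewrite moduleP. intros [k [_ [Hr _]]]. exact Hr. Qed.

Lemma module_monotone i j r : i <= j -> module ar P e i r -> module ar P e j r.
Proof.
  intros Hij. rewrite !moduleP. intros [k [Hk H]]. exists k. split; [lia | exact H].
Qed.

Lemma module_head_nonempty i r : module ar P e i r -> Defs.head r <> [].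
Proof.
  rewrite moduleP. intros [k [_ [_ [A [HA _]]]]] Eh. rewrite Eh in HA. exact HA.
Qed.

Lemma atoms_of_module_depends {i A} :
  atoms_of (module ar P e i) A -> exists k, k <= i /\ depends ar P (e k) A.
Proof.
  intros [r [Hr HA]]. apply moduleP in Hr.
  destruct Hr as [k [Hk [Hg [B [HB Hdep]]]]].
  exists k. split; [exact Hk |].
  apply rt_trans with B; [exact Hdep |]. apply rt_step. exists r. auto.
Qed.

Lemma module_downward_closed i : downward_closed ar P (module ar P e i).
Proof.
  intros A HA r Hg Hh. destruct (atoms_of_module_depends HA) as [k [Hk Hdep]].
  apply moduleP. exists k. split; [exact Hk |]. split; [exact Hg |]. exists A. auto.
Qed.

Lemma Ground_in_some_module len r :
  disjunctive_program P -> is_enumeration (GH ar P) len e ->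
  Ground ar P r -> exists i, in_range len i /\ module ar P e i r.
Proof.
  intros HP [_ [Honto _]] Hg.
  destruct (nonnil_In (Ground_head_nonempty HP Hg)) as [A HA].
  destruct (Honto A) as [i [Hi Hei]]; [exists r; auto |].
  exists i. split; [exact Hi |]. apply moduleP. exists i. split; [lia |].
  split; [exact Hg |]. exists A. split; [exact HA | rewrite Hei; apply rt_refl].
Qed.

End Modules.

Theorem proposition3p2 (F Pr : Type) (ar : F -> nat) (P : program F Pr)
  (len : option nat) (e : nat -> atom F Pr) :
  disjunctive_program P ->
  is_enumeration (GH ar P) len e ->
  (* (1) *)
  (forall r, Ground ar P r <-> exists i, in_range len i /\ module ar P e i r) /\
  (* (2) *)
  (forall i j, in_range len i -> in_range len j -> i <= j ->
     splitting_set (atoms_of (module ar P e i)) (module ar P e j) /\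
     same_rules (module ar P e i)
                (bot (atoms_of (module ar P e i)) (module ar P e j))) /\
  (* (3) *)
  (forall i, in_range len i ->
     splitting_set (atoms_of (module ar P e i)) (Ground ar P) /\
     same_rules (module ar P e i)
                (bot (atoms_of (module ar P e i)) (Ground ar P))) /\
  (* (4) *)
  (forall i, in_range len i -> downward_closed ar P (module ar P e i)).
Proof.
  intros HP Henum.
  assert (Hdc : forall i, downward_closed ar P (module ar P e i))
    by exact module_downward_closed.
  assert (HG : forall i r, module ar P e i r -> Ground ar P r)
    by exact module_Ground.
  assert (Hhead : forall i r, module ar P e i r -> Defs.head r <> [])
    by exact module_head_nonempty.
  split; [| split; [| split]].
  - intros r. split; [exact (Ground_in_some_module len r HP Henum) |].
    intros [i [_ Hr]]. exact (HG i r Hr).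
  - intros i j _ _ Hij. split.
    + eapply downward_closed_splitting_set; [apply Hdc | apply HG].
    + eapply downward_closed_bot; [apply Hdc | apply Hhead | | apply HG].
      intros r. apply module_monotone; exact Hij.
  - intros i _. split.
    + eapply downward_closed_splitting_set; [apply Hdc | auto].
    + eapply downward_closed_bot; [apply Hdc | apply Hhead | apply HG | auto].
  - intros i _. apply Hdc.
Qed.
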